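(* Let $K\ge1$, $T\ge1$ and $\ell_1,\dots,\ell_T\in[0,1]^K$, and suppose $H^{\mathrm{ah}}_T\ge L^*_T$. Then the cumulative loss variance for AdaHedge satisfies \[ V^{\mathrm{ah}}_T\le\frac{L^*_T(T-L^*_T)}{T}+2\Delta^{\mathrm{ah}}_T. \]
   Context: Hedge setting: $K$ experts; in round $t$ the learner chooses a probability vector $w_t$, then $\ell_t$ is revealed and the learner suffers $h_t=\sum_kw_{t,k}\ell_{t,k}$. Write $L_{t,k}=\sum_{s=1}^t\ell_{s,k}$ ($L_{0,k}=0$), $L^*_t=\min_kL_{t,k}$, $H_T=\sum_{t\le T}h_t$. Exponential weights with learning rate $\eta\in(0,\infty]$ at time $t$: $w_{t,k}=e^{-\eta L_{t-1,k}}/\sum_je^{-\eta L_{t-1,j}}$ if $\eta<\infty$; for $\eta=\infty$, $w_t$ uniform on $\{k:L_{t-1,k}=L^*_{t-1}\}$. With learning rate $\eta_t$ in round $t$: mix loss $m_t=-\frac1{\eta_t}\ln\sum_kw_{t,k}e^{-\eta_t\ell_{t,k}}$ if $\eta_t<\infty$, $m_t=L^*_t-L^*_{t-1}$ if $\eta_t=\infty$; mixability gap $\delta_t=h_t-m_t$; loss variance $v_t=\sum_kw_{t,k}(\ell_{t,k}-h_t)^2$. AdaHedge: $\Delta^{\mathrm{ah}}_0=0$; in round $t$, $\eta^{\mathrm{ah}}_t=\ln K/\Delta^{\mathrm{ah}}_{t-1}$ ($=\infty$ if $\Delta^{\mathrm{ah}}_{t-1}=0$), weights are exponential weights with learning rate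 $\eta^{\mathrm{ah}}_t$ from $L_{t-1}$, and $\Delta^{\mathrm{ah}}_t=\Delta^{\mathrm{ah}}_{t-1}+\delta^{\mathrm{ah}}_t$. $H^{\mathrm{ah}}_T$ is AdaHedge's cumulative loss and $V^{\mathrm{ah}}_T=\sum_{t\le T}v^{\mathrm{ah}}_t$. *)

From HB Require Import structures.
From mathcomp Require Import all_boot all_order all_algebra.
From mathcomp Require Import reals.
From mathcomp Require Import sequences exp.
Set Implicit Arguments. Unset Strict Implicit. Unset Printing Implicit Defensive.
Import Order.TTheory GRing.Theory Num.Theory.
Local Open Scope ring_scope.

Section AdaHedge.
Variables (R : realType) (K : nat) (loss : nat -> 'I_K -> R).
(* loss t k = ell_{t,k}, for rounds t = 1, 2, ... (loss 0 is never used) *)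

Definition cumL (t : nat) (k : 'I_K) : R := \sum_(1 <= s < t.+1) loss s k.

(* minimum over the experts (K >= 1 in the theorem; 0 if there are none) *)
Definition minL (f : 'I_K -> R) : R :=
  if [pick k : 'I_K] is Some k0 then \big[Num.min/f k0]_k f k else 0.

Definition Lstar (t : nat) : R := minL (cumL t).

(* learning rate: Some eta is a finite eta, None is eta = infinity *)
Definition expw (eta : option R) (Lp : 'I_K -> R) (k : 'I_K) : R :=
  match eta with
  | Some e => expR (- (e * Lp k)) / \sum_(j : 'I_K) expR (- (e * Lp j))
  | None => if Lp k == minL Lp
            then (#|[set j : 'I_K | Lp j == minL Lp]|%:R)^-1 else 0
  end.

Definition ah_eta (D : R) : option R :=
  if D == 0 then None else Some (ln (K%:R) / D).

Definition hloss (w : 'I_K -> R) (t : nat) : R := \sum_k w k * loss t k.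

Definition mixloss (eta : option R) (w : 'I_K -> R) (t : nat) : R :=
  match eta with
  | Some e => - (e^-1 * ln (\sum_k w k * expR (- (e * loss t k))))
  | None => Lstar t - Lstar t.-1
  end.

Definition lvar (w : 'I_K -> R) (t : nat) : R :=
  \sum_k w k * (loss t k - hloss w t) ^+ 2.

Fixpoint ah_Delta (t : nat) : R :=
  match t with
  | 0 => 0
  | s.+1 =>
      let eta := ah_eta (ah_Delta s) in
      let w := expw eta (cumL s) in
      ah_Delta s + (hloss w s.+1 - mixloss eta w s.+1)
  end.

Definition ah_w (t : nat) : 'I_K -> R := expw (ah_eta (ah_Delta t.-1)) (cumL t.-1).

Definition ah_H (T : nat) : R := \sum_(1 <= t < T.+1) hloss (ah_w t) t.
Definition ah_V (T : nat) : R := \sum_(1 <= t < T.+1) lvar (ah_w t) t.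

End AdaHedge.

(* Since losses lie in [0,1], each loss variance satisfies v_t <= h_t - h_t^2;
   summing and applying Cauchy-Schwarz to the h_t gives V <= H - H^2/T.
   AdaHedge's regret bound H <= L* + 2 Delta comes from the potential
   M_eta(L) = -1/eta ln sum_k exp(-eta L_k): the mix loss is its increment,
   and M_eta(L) + ln K/eta is nonincreasing in eta (a power-mean inequality),
   which yields the invariant H_t <= M_{eta_{t+1}}(L_t) + 2 Delta_t.
   With 0 <= L* <= H this gives H^2/T >= L*^2/T, whence the claim. *)
Set Warnings "-notation-overridden,-ambiguous-paths".
From HB Require Import structures.
From mathcomp Require Import all_boot all_order all_algebra.
From mathcomp Require Import reals interval_inference.
From mathcomp Require Import sequences exp convex.
From mathcomp Require Import ring lra.
Import Order.TTheory GRing.Theory Num.Theory.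
Local Open Scope ring_scope.
Set Implicit Arguments. Unset Strict Implicit. Unset Printing Implicit Defensive.

Lemma expR_mul_le (R : realType) (s y : R) : 0 <= s <= 1 ->
  expR (s * y) <= 1 - s + s * expR y.
Proof.
case/andP=> s0 s1.
have := @convex_expR R (Itv01 s0 s1) y 0.
by rewrite !convRE /= mulr0 addr0 expR0 mulr1 addrC.
Qed.

Lemma sqr_sum_le (R : realFieldType) (f : nat -> R) (T : nat) : (1 <= T)%N ->
  (\sum_(1 <= t < T.+1) f t) ^+ 2 <= T%:R * \sum_(1 <= t < T.+1) f t ^+ 2.
Proof.
move=> T1; set S := \sum_(1 <= t < T.+1) f t.
have Tp : 0 < T%:R :> R by rewrite ltr0n.
have spread : \sum_(1 <= t < T.+1) (f t - S / T%:R) ^+ 2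
              = \sum_(1 <= t < T.+1) f t ^+ 2 - S ^+ 2 / T%:R.
  transitivity (\sum_(1 <= t < T.+1) (f t ^+ 2 - 2 * (S / T%:R) * f t + (S / T%:R) ^+ 2)).
    by apply: eq_bigr => t _; ring.
  rewrite big_split /= sumrB -mulr_sumr sumr_const_nat subSS subn0 -/S -mulr_natr.
  by field; rewrite lt0r_neq0.
have : 0 <= \sum_(1 <= t < T.+1) f t ^+ 2 - S ^+ 2 / T%:R.
  by rewrite -spread sumr_ge0 // => t _; exact: sqr_ge0.
by rewrite subr_ge0 ler_pdivrMr // mulrC.
Qed.

Section Potential.
Variables (R : realType) (K : nat).
Hypothesis K_gt0 : (0 < K)%N.

Let k0 : 'I_K := Ordinal K_gt0.

Lemma minL_le (f : 'I_K -> R) k : minL f <= f k.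
Proof. by rewrite /minL; case: pickP => [k1 _|/(_ k)//]; exact: bigmin_le. Qed.

Lemma minL_attained (f : 'I_K -> R) : exists k, minL f = f k.
Proof.
case: (arg_minP f (P := xpredT) (i0 := k0)) => // k _ kmin.
exists k; apply/le_anti; rewrite minL_le /minL.
case: pickP => [k1 _|/(_ k0)//].
by apply: le_bigmin => [|j _]; exact: kmin.
Qed.

Lemma sum_expR_gt0 (e : R) (L : 'I_K -> R) : 0 < \sum_k expR (- (e * L k)).
Proof.
rewrite (bigD1 k0) //= ltr_wpDr ?expR_gt0 //.
by rewrite sumr_ge0 // => j _; rewrite expR_ge0.
Qed.

Lemma expw_ge0 eta (L : 'I_K -> R) k : 0 <= expw eta L k.
Proof.
case: eta => [e|] /=; first by rewrite divr_ge0 // ?expR_ge0 // ltW ?sum_expR_gt0.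
by case: ifP => // _; rewrite invr_ge0 ler0n.
Qed.

Lemma sum_expw eta (L : 'I_K -> R) : \sum_k expw eta L k = 1.
Proof.
case: eta => [e|] /=; first by rewrite -mulr_suml mulfV // gt_eqF ?sum_expR_gt0.
rewrite -big_mkcond /= sumr_const cardsE -[_^-1 *+ _]mulr_natr mulVf // pnatr_eq0 -lt0n.
by case: (minL_attained L) => k Lk; apply/card_gt0P; exists k; apply/eqP; rewrite Lk.
Qed.

(* The mix-loss potential; [None] stands for eta = +oo, where it degenerates to the minimum. *)
Definition potential (eta : option R) (L : 'I_K -> R) : R :=
  match eta with
  | Some e => - (e^-1 * ln (\sum_k expR (- (e * L k))))
  | None => minL L
  end.

Lemma potential_le_minL e (L : 'I_K -> R) : 0 < e -> potential (Some e) L <= minL L.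
Proof.
move=> e_gt0 /=; case: (minL_attained L) => k ->.
have : expR (- (e * L k)) <= \sum_j expR (- (e * L j)).
  by rewrite (bigD1 k) //= lerDl sumr_ge0 // => j _; rewrite expR_ge0.
have e_inv_ge0 : 0 <= e^-1 by rewrite invr_ge0 ltW.
rewrite -ler_ln ?posrE ?expR_gt0 ?sum_expR_gt0 // expRK => /(ler_wpM2l e_inv_ge0).
by rewrite mulrN mulKf ?gt_eqF //; lra.
Qed.

Lemma minL_le_potential e (L : 'I_K -> R) : 0 < e ->
  minL L - ln K%:R / e <= potential (Some e) L.
Proof.
move=> e_gt0 /=.
have : \sum_j expR (- (e * L j)) <= K%:R * expR (- (e * minL L)).
  apply: le_trans (_ : \sum_(j : 'I_K) expR (- (e * minL L)) <= _).
    by apply: ler_sum => j _; rewrite ler_expR lerN2 ler_pM2l ?minL_le.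
  by rewrite sumr_const card_ord mulr_natl.
rewrite -ler_ln ?posrE ?mulr_gt0 ?expR_gt0 ?ltr0n ?sum_expR_gt0 //.
rewrite lnM ?posrE ?expR_gt0 ?ltr0n // expRK => ln_le.
have -> : minL L - ln K%:R / e = - (e^-1 * (ln K%:R - e * minL L)).
  by field; rewrite gt_eqF.
by rewrite lerN2 ler_pM2l ?invr_gt0 //; lra.
Qed.

(* With s = e'/e <= 1, convexity of expR bounds the mean of x_k^s by (mean of x_k)^s,
   for x_k = exp(-e L_k). *)
Lemma potentialD_ln_le e e' (L : 'I_K -> R) : 0 < e' <= e ->
  potential (Some e) L + ln K%:R / e <= potential (Some e') L + ln K%:R / e'.
Proof.
case/andP=> e'_gt0 e'e /=.
have e_gt0 : 0 < e by apply: lt_le_trans e'e.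
have K_pos : 0 < K%:R :> R by rewrite ltr0n.
set S := \sum_k expR (- (e * L k)); have S_gt0 : 0 < S by exact: sum_expR_gt0.
set s := e' / e.
have s01 : 0 <= s <= 1 by rewrite /s divr_ge0 ?ler_pdivrMr ?mul1r // ltW.
set m := S / K%:R; have m_gt0 : 0 < m by rewrite divr_gt0.
have power_mean : \sum_k expR (- (e' * L k)) <= K%:R * expR (s * ln m).
  apply: le_trans (_ : \sum_k expR (s * ln m) * (1 - s + s * (expR (- (e * L k)) / m)) <= _).
    apply: ler_sum => k _.
    have -> : expR (- (e' * L k)) = expR (s * ln m) * expR (s * (- (e * L k) - ln m)).
      by rewrite -expRD; congr expR; rewrite /s; field; rewrite gt_eqF.
    rewrite ler_wpM2l ?expR_ge0 // -[m in _ / m]lnK ?posrE // -expRB.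
    exact: expR_mul_le.
  rewrite -mulr_sumr mulrC ler_wpM2r ?expR_ge0 //.
  rewrite big_split /= sumr_const card_ord -mulr_sumr -mulr_suml -/S.
  have -> : S / m = K%:R by rewrite /m; field; rewrite !gt_eqF.
  by rewrite -[(1 - s) *+ K]mulr_natr -mulrDl subrK mul1r.
move: power_mean; rewrite -ler_ln ?posrE ?mulr_gt0 ?expR_gt0 ?sum_expR_gt0 //.
rewrite lnM ?posrE ?expR_gt0 // expRK ln_div ?posrE //.
have e'_inv_ge0 : 0 <= e'^-1 by rewrite invr_ge0 ltW.
move=> /(ler_wpM2l e'_inv_ge0).
have -> : e'^-1 * (ln K%:R + s * (ln S - ln K%:R)) =
          e^-1 * ln S - ln K%:R / e + ln K%:R / e'.
  by rewrite /s; field; rewrite !gt_eqF.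
lra.
Qed.

Lemma mix_le_mean e (w l : 'I_K -> R) : 0 <= e ->
  (forall k, 0 <= w k) -> \sum_k w k = 1 -> (forall k, 0 <= l k) ->
  - (e^-1 * ln (\sum_k w k * expR (- (e * l k)))) <= \sum_k w k * l k.
Proof.
move=> e_ge0 w_ge0 w_sum1 l_ge0; set h := \sum_k w k * l k.
have h_ge0 : 0 <= h by rewrite sumr_ge0 // => k _; rewrite mulr_ge0.
have [->|e_neq0] := eqVneq e 0; first by rewrite invr0 !mul0r oppr0.
have e_gt0 : 0 < e by rewrite lt0r e_neq0.
(* the tangent line of expR at -e h, averaged against w *)
have jensen : expR (- (e * h)) <= \sum_k w k * expR (- (e * l k)).
  have tangent_mean : \sum_k w k * (expR (- (e * h)) * (1 - e * (l k - h)))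
                      = expR (- (e * h)).
    transitivity (\sum_k (expR (- (e * h)) * w k
        - expR (- (e * h)) * e * (w k * l k) + expR (- (e * h)) * e * h * w k)).
      by apply: eq_bigr => k _; ring.
    by rewrite big_split /= sumrB -!mulr_sumr w_sum1 -/h; ring.
  rewrite -{1}tangent_mean; apply: ler_sum => k _; rewrite ler_wpM2l //.
  have -> : expR (- (e * l k)) = expR (- (e * h)) * expR (- (e * (l k - h))).
    by rewrite -expRD; congr expR; ring.
  by rewrite ler_wpM2l ?expR_ge0 //; exact: expR_ge1Dx.
have mix_gt0 := lt_le_trans (expR_gt0 _) jensen.
have e_inv_ge0 : 0 <= e^-1 by rewrite invr_ge0 ltW.
move: jensen; rewrite -ler_ln ?posrE ?expR_gt0 // expRK => /(ler_wpM2l e_inv_ge0).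
by rewrite mulrN mulKf //; lra.
Qed.

Lemma potentialD_Delta_le (D1 D2 : R) (L : 'I_K -> R) : (1 < K)%N -> 0 <= D1 -> D1 <= D2 ->
  potential (ah_eta K D1) L + D1 <= potential (ah_eta K D2) L + D2.
Proof.
move=> K_gt1 D1_ge0 D12; have lnK_gt0 : 0 < ln K%:R :> R by rewrite ln_gt0 ?ltr1n.
have ln_eta (D : R) : 0 < D -> ln K%:R / (ln K%:R / D) = D.
  by move=> D_gt0; field; rewrite !gt_eqF.
rewrite /ah_eta; case: (eqVneq D1 0) => [->|D1_neq0]; case: (eqVneq D2 0) => [D2_eq0|D2_neq0].
- by rewrite D2_eq0.
- have D2_gt0 : 0 < D2 by rewrite lt0r D2_neq0 (le_trans D1_ge0).
  have := minL_le_potential L (divr_gt0 lnK_gt0 D2_gt0).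
  by rewrite ln_eta //= addr0; lra.
- by move: D1_neq0; rewrite eq_le D1_ge0 andbT -D2_eq0 D12.
- have D1_gt0 : 0 < D1 by rewrite lt0r D1_neq0.
  have D2_gt0 : 0 < D2 by apply: lt_le_trans D12.
  have := @potentialD_ln_le (ln K%:R / D1) (ln K%:R / D2) L.
  rewrite !ln_eta //; apply; rewrite divr_gt0 //= ler_pM2l //.
  by rewrite lef_pV2 ?posrE.
Qed.

End Potential.

Lemma lvar_le_hloss (R : realType) (K : nat) (loss : nat -> 'I_K -> R) (w : 'I_K -> R) t :
  (forall k, 0 <= loss t k <= 1) -> (forall k, 0 <= w k) -> \sum_k w k = 1 ->
  lvar loss w t <= hloss loss w t - hloss loss w t ^+ 2.
Proof.
move=> loss01 w_ge0 w_sum1; set h := hloss loss w t.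
have -> : lvar loss w t = \sum_k w k * loss t k ^+ 2 - h ^+ 2.
  transitivity (\sum_k (w k * loss t k ^+ 2 - 2 * h * (w k * loss t k) + h ^+ 2 * w k)).
    by apply: eq_bigr => k _; rewrite /h; ring.
  by rewrite big_split /= sumrB -!mulr_sumr w_sum1 -[\sum_k _ * loss t k]/h; ring.
rewrite lerD2r /h /hloss; apply: ler_sum => k _.
by case/andP: (loss01 k) => l_ge0 l_le1; rewrite ler_wpM2l // expr2 ler_piMl.
Qed.

Lemma variance_bound_of_regret (R : realFieldType) (T V H Q Ls D : R) :
  0 < T -> 0 <= Ls <= H -> H <= Ls + 2 * D -> H ^+ 2 <= T * Q -> V <= H - Q ->
  V <= Ls * (T - Ls) / T + 2 * D.
Proof.
move=> T_gt0 /andP[Ls_ge0 Ls_le_H] H_le sqr_le V_le.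
have : H ^+ 2 / T <= Q by rewrite ler_pdivrMr // mulrC.
have : Ls ^+ 2 / T <= H ^+ 2 / T.
  by rewrite ler_pM2r ?invr_gt0 // ler_pXn2r ?nnegrE ?(le_trans Ls_ge0).
have -> : Ls * (T - Ls) / T = Ls - Ls ^+ 2 / T by field; rewrite gt_eqF.
lra.
Qed.

Section AdaHedge.
Variables (R : realType) (K : nat) (loss : nat -> 'I_K -> R).
Hypothesis K_gt0 : (0 < K)%N.

Local Notation L := (cumL loss).
Local Notation D := (ah_Delta loss).

Lemma cumLS t k : L t.+1 k = L t k + loss t.+1 k.
Proof. by rewrite /cumL big_nat_recr. Qed.

Lemma mixloss_expw eta t :
  mixloss loss eta (expw eta (L t)) t.+1 = potential eta (L t.+1) - potential eta (L t).
Proof.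
case: eta => [e|] //=; set Z := \sum_j expR (- (e * L t j)).
have -> : \sum_k expR (- (e * L t k)) / Z * expR (- (e * loss t.+1 k)) =
          (\sum_k expR (- (e * L t.+1 k))) / Z.
  by rewrite mulr_suml; apply: eq_bigr => k _; rewrite cumLS mulrDr opprD expRD; ring.
by rewrite ln_div ?posrE ?sum_expR_gt0 //; ring.
Qed.

Variable T : nat.
Hypothesis loss01 : forall t k, (1 <= t <= T)%N -> 0 <= loss t k <= 1.

Lemma mixloss_le_hloss (Dp : R) t : 0 <= Dp -> (t < T)%N ->
  mixloss loss (ah_eta K Dp) (expw (ah_eta K Dp) (L t)) t.+1
  <= hloss loss (expw (ah_eta K Dp) (L t)) t.+1.
Proof.
move=> Dp_ge0 tT; have l_ge0 k : 0 <= loss t.+1 k by case/andP: (@loss01 t.+1 k tT).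
rewrite /ah_eta; case: ifP => _; last first.
  apply: mix_le_mean; rewrite ?divr_ge0 ?ln_ge0 ?ler1n //.
    exact: expw_ge0.
  exact: sum_expw.
(* the weights sit on leaders, whose loss is at least the increase of L* *)
rewrite /= -[_ - _]mul1r -(sum_expw K_gt0 None (L t)) mulr_suml /hloss.
apply: ler_sum => k _; rewrite /=; case: ifP => [/eqP Lk|_]; last by rewrite !mul0r.
rewrite ler_wpM2l ?invr_ge0 ?ler0n //.
by have := minL_le (L t.+1) k; rewrite /Lstar -Lk cumLS; lra.
Qed.

Lemma ah_DeltaS t : D t.+1 = D t +
  (hloss loss (ah_w loss t.+1) t.+1 - mixloss loss (ah_eta K (D t)) (ah_w loss t.+1) t.+1).
Proof. by []. Qed.

Lemma Lstar_ge0 : 0 <= Lstar loss T.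
Proof.
case: (minL_attained K_gt0 (L T)) => k; rewrite /Lstar => ->.
rewrite /cumL big_nat_cond sumr_ge0 // => t /andP[tT _].
by case/andP: (loss01 k tT).
Qed.

Lemma ah_V_le : ah_V loss T
  <= ah_H loss T - \sum_(1 <= t < T.+1) hloss loss (ah_w loss t) t ^+ 2.
Proof.
rewrite /ah_V /ah_H -sumrB big_nat_cond [X in _ <= X]big_nat_cond.
apply: ler_sum => t /andP[tT _]; apply: lvar_le_hloss => [k|k|].
- exact: loss01.
- exact: expw_ge0.
- exact: sum_expw.
Qed.

Lemma ah_Delta_ge0 t : (t <= T)%N -> 0 <= D t.
Proof.
elim: t => [//|t IH] tT; have Dt_ge0 := IH (ltnW tT).
by rewrite ah_DeltaS addr_ge0 // subr_ge0 mixloss_le_hloss.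
Qed.

Lemma ah_Delta_leS t : (t < T)%N -> D t <= D t.+1.
Proof.
move=> tT; rewrite ah_DeltaS lerDl subr_ge0 mixloss_le_hloss //.
exact: ah_Delta_ge0 (ltnW tT).
Qed.

Lemma ah_HS t : ah_H loss t.+1 = ah_H loss t + hloss loss (ah_w loss t.+1) t.+1.
Proof. by rewrite /ah_H big_nat_recr. Qed.

Lemma ah_H_le_potential t : (1 < K)%N -> (t <= T)%N ->
  ah_H loss t <= potential (ah_eta K (D t)) (L t) + 2 * D t.
Proof.
move=> K_gt1; elim: t => [|t IH] tT.
  rewrite /ah_H big_geq // /ah_eta eqxx /=.
  by case: (minL_attained K_gt0 (L 0)) => k ->; rewrite /cumL big_geq ?mulr0 ?addr0.
have := IH (ltnW tT); have := ah_DeltaS t; rewrite ah_HS mixloss_expw.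
have := potentialD_Delta_le K_gt0 (L t.+1) K_gt1 (ah_Delta_ge0 (ltnW tT)) (ah_Delta_leS tT).
lra.
Qed.

Lemma ah_H_le_Lstar : ah_H loss T <= Lstar loss T + 2 * D T.
Proof.
have DT_ge0 := ah_Delta_ge0 (leqnn T).
case: (ltnP 1 K) => [K_gt1|K_le1].
  apply: le_trans (ah_H_le_potential K_gt1 (leqnn T)) _.
  rewrite lerD2r /Lstar /ah_eta; case: eqVneq => //= DT_neq0.
  by apply: (potential_le_minL K_gt0); rewrite divr_gt0 ?ln_gt0 ?ltr1n // lt0r DT_neq0.
(* a single expert: the learner suffers exactly its loss *)
pose k0 := Ordinal K_gt0.
have ord_k0 (j : 'I_K) : j = k0.
  by apply/val_inj/eqP; rewrite /= -leqn0 -ltnS (leq_trans (ltn_ord j)).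
have sum1 (F : 'I_K -> R) : \sum_k F k = F k0.
  by rewrite (big_pred1 k0) // => j; rewrite /= [j]ord_k0 eqxx.
have -> : ah_H loss T = L T k0.
  apply: eq_big_nat => t _.
  by rewrite /hloss sum1 -(sum1 (ah_w loss t)) sum_expw ?mul1r.
have -> : Lstar loss T = L T k0.
  by rewrite /Lstar; case: (minL_attained K_gt0 (L T)) => k ->; rewrite [k]ord_k0.
lra.
Qed.

End AdaHedge.

Unset Implicit Arguments.
Theorem lemma7 (R : realType) (K T : nat) (loss : nat -> 'I_K -> R)
  (hK : (1 <= K)%N) (hT : (1 <= T)%N)
  (hloss01 : forall t k, (1 <= t <= T)%N -> 0 <= loss t k <= 1)
  (hHL : Lstar loss T <= ah_H loss T) :
  ah_V loss T <= Lstar loss T * (T%:R - Lstar loss T) / T%:R + 2 * ah_Delta loss T.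
Proof.
apply: (variance_bound_of_regret _ _ (ah_H_le_Lstar hK hloss01) (sqr_sum_le _ hT)
                                 (ah_V_le hK hloss01)).
- by rewrite ltr0n.
- by rewrite (Lstar_ge0 hK hloss01) hHL.
Qed.
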